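(* Let $D\ge 2$, $T\ge 3$, $N\ge 3$ and let $S\in(\{0\}\cup\mathbb{N}\cup\{\infty\})^{T\times N}$. Suppose there are three distinct columns $j_1,j_2,j_3$ and three distinct rows $t_1,t_2,t_3$ such that each of the columns $j_1,j_2,j_3$ has finite entries only in rows among $t_1,t_2,t_3$, and the $3\times 3$ submatrix on rows $t_1,t_2,t_3$ and columns $j_1,j_2,j_3$ has the form $$\begin{pmatrix}\delta&\varepsilon&\infty\\ \zeta&\infty&\eta\\ \infty&\vartheta&\kappa\end{pmatrix}$$ with $\delta,\varepsilon,\zeta,\eta,\vartheta,\kappa$ finite. Then $S$ is not a $(T,N,D)$-tropical code.
   Context: Tropical arithmetic on $\mathbb{R}\cup\{\infty\}$: $x\oplus y=\min(x,y)$, $x\odot y=x+y$, with $x\oplus\infty=x$ and $x\odot\infty=\infty$. For a matrix $S$ with $T$ rows and $N$ columns and a column vector $\mathbf{x}$ of length $N$, $S\odot\mathbf{x}$ is the vector whose $t$-th entry is $\min_{j}(S_{tj}+x_j)$. A $(T,N,D)$-tropical code is a matrix $S\in(\{0\}\cup\mathbb{N}\cup\{\infty\})^{T\times N}$ such that for any two distinct vectors $\mathbf{x},\mathbf{y}\in(\{0\}\cup\mathbb{N}\cup\{\infty\})^{N}$, each having at most $D$ finite entries, $S\odot\mathbf{x}\ne S\odot\mathbf{y}$. *)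

(* Tropical values {0} ∪ N ∪ {∞} are modelled as [option nat],
   with [None] = ∞ and [Some n] = n. *)
From mathcomp Require Import all_boot all_algebra.
Set Implicit Arguments. Unset Strict Implicit. Unset Printing Implicit Defensive.

Definition trop := option nat.

Definition tplus (x y : trop) : trop :=
  match x, y with
  | None, _ => y
  | _, None => x
  | Some a, Some b => Some (minn a b)
  end.

Definition ttimes (x y : trop) : trop :=
  match x, y with
  | Some a, Some b => Some (a + b)
  | _, _ => None
  end.

Definition trop_mv (T N : nat) (S : 'M[trop]_(T, N)) (x : {ffun 'I_N -> trop})
  : {ffun 'I_T -> trop} :=
  [ffun t => foldr tplus None [seq ttimes (S t j) (x j) | j <- enum 'I_N]].

Definition nfinite (N : nat) (x : {ffun 'I_N -> trop}) : nat :=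
  #|[set j | x j != None]|.

Definition tropical_code (T N D : nat) (S : 'M[trop]_(T, N)) : Prop :=
  forall x y : {ffun 'I_N -> trop},
    nfinite x <= D -> nfinite y <= D -> x <> y -> trop_mv S x <> trop_mv S y.

(** Put weight 0 on column [j1] in both inputs, and a large weight on [j3]
    in the first and on [j2] in the second.  The large weights are absorbed
    by the minimum in rows [t1] and [t2], which therefore read [delta] resp.
    [zeta] for both inputs (so [epsilon] and [eta] need not even be finite);
    row [t3] reads [kappa + M] resp. [theta + b], and [M = delta + zeta + theta],
    [b = kappa + delta + zeta] make these equal.  All other rows are [oo] on
    the three columns, so the two distinct 2-sparse inputs collide. *)
From HB Require Import structures.
From mathcomp Require Import all_boot all_algebra.
From mathcomp Require Import zify.

Lemma tplusA : associative tplus.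
Proof. by case=> [a|] [b|] [c|] //=; rewrite minnA. Qed.

Lemma tplusC : commutative tplus.
Proof. by case=> [a|] [b|] //=; rewrite minnC. Qed.

Lemma tplus0 : left_id None tplus.
Proof. by case. Qed.

HB.instance Definition _ := Monoid.isComLaw.Build trop None tplus tplusA tplusC tplus0.

Lemma tplus_ttimes_absorb (a c : nat) (s : trop) :
  a <= c -> tplus (Some a) (ttimes s (Some c)) = Some a.
Proof. by case: s => [s|] //= le_ac; rewrite (minn_idPl _) // (leq_trans le_ac) ?leq_addl. Qed.

Definition tvec2 {N : nat} (i k : 'I_N) (a b : nat) : {ffun 'I_N -> trop} :=
  [ffun j => if j == i then Some a else if j == k then Some b else None].

Lemma nfinite_tvec2 (N : nat) (i k : 'I_N) (a b : nat) : nfinite (tvec2 i k a b) <= 2.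
Proof.
apply: leq_trans (_ : #|[set i; k]| <= 2); last by rewrite cards2; case: (_ != _).
apply/subset_leq_card/subsetP => j; rewrite !inE ffunE.
by case: (j == i) => //; case: (j == k).
Qed.

Lemma trop_mv_tvec2 (T N : nat) (S : 'M[trop]_(T, N)) (i k : 'I_N) (a b : nat) t :
  i != k ->
  trop_mv S (tvec2 i k a b) t =
    tplus (ttimes (S t i) (Some a)) (ttimes (S t k) (Some b)).
Proof.
move=> ne_ik; rewrite ffunE foldrE big_map big_enum /=.
rewrite (bigD1 i) //= (bigD1 k) /=; last by rewrite eq_sym ne_ik.
rewrite big1 => [|j /andP[/negbTE ji /negbTE jk]].
  by rewrite [tplus _ None]tplusC /= !ffunE eqxx eq_sym (negbTE ne_ik) eqxx.
by rewrite ffunE ji jk; case: (S t j).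
Qed.

Section Collision.

Variables (T N : nat) (S : 'M[trop]_(T, N)) (j1 j2 j3 : 'I_N) (t1 t2 t3 : 'I_T).
Hypotheses (ne12 : j1 != j2) (ne13 : j1 != j3).
Hypothesis supp : forall (j : 'I_N) (t : 'I_T), j \in [:: j1; j2; j3] ->
  S t j != None -> t \in [:: t1; t2; t3].
Variables delta zeta theta kappa : nat.
Hypotheses (S11 : S t1 j1 = Some delta) (S13 : S t1 j3 = None).
Hypotheses (S21 : S t2 j1 = Some zeta) (S22 : S t2 j2 = None).
Hypotheses (S31 : S t3 j1 = None) (S32 : S t3 j2 = Some theta)
           (S33 : S t3 j3 = Some kappa).

Lemma trop_mv_collision :
  trop_mv S (tvec2 j1 j3 0 (delta + zeta + theta)) =
  trop_mv S (tvec2 j1 j2 0 (kappa + delta + zeta)).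
Proof.
apply/ffunP => t; rewrite !trop_mv_tvec2 //.
have [-> | ne_t1] := eqVneq t t1.
  by rewrite S11 S13 !tplus_ttimes_absorb //; lia.
have [-> | ne_t2] := eqVneq t t2.
  by rewrite S21 S22 !tplus_ttimes_absorb //; lia.
have [-> | ne_t3] := eqVneq t t3.
  by rewrite S31 S32 S33 /=; congr Some; lia.
have Sout j : j \in [:: j1; j2; j3] -> S t j = None.
  move=> jJ; apply/eqP/contraT => /(supp j t jJ).
  by rewrite !inE (negbTE ne_t1) (negbTE ne_t2) (negbTE ne_t3).
by rewrite !Sout // !inE eqxx ?orbT.
Qed.

End Collision.

Theorem mainTheorem5 (T N D : nat) (S : 'M[trop]_(T, N))
  (hD : 2 <= D) (hT : 3 <= T) (hN : 3 <= N)
  (j1 j2 j3 : 'I_N) (t1 t2 t3 : 'I_T)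
  (hj : [/\ j1 != j2, j1 != j3 & j2 != j3])
  (ht : [/\ t1 != t2, t1 != t3 & t2 != t3])
  (hsupp : forall (j : 'I_N) (t : 'I_T), j \in [:: j1; j2; j3] ->
             S t j != None -> t \in [:: t1; t2; t3])
  (h11 : S t1 j1 != None) (h12 : S t1 j2 != None) (h13 : S t1 j3 = None)
  (h21 : S t2 j1 != None) (h22 : S t2 j2 = None) (h23 : S t2 j3 != None)
  (h31 : S t3 j1 = None) (h32 : S t3 j2 != None) (h33 : S t3 j3 != None) :
  ~ tropical_code D S.
Proof.
case: hj => ne12 ne13 ne23.
case E11: (S t1 j1) h11 => [delta|] // _.
case E21: (S t2 j1) h21 => [zeta|] // _.
case E32: (S t3 j2) h32 => [theta|] // _.
case E33: (S t3 j3) h33 => [kappa|] // _.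
move=> /(_ (tvec2 j1 j3 0 (delta + zeta + theta))
            (tvec2 j1 j2 0 (kappa + delta + zeta))); apply.
- exact: leq_trans (nfinite_tvec2 _ _ _ _ _) hD.
- exact: leq_trans (nfinite_tvec2 _ _ _ _ _) hD.
- move=> /ffunP/(_ j2); rewrite !ffunE eqxx.
  by rewrite eq_sym (negbTE ne12) (negbTE ne23).
- exact: trop_mv_collision E11 h13 E21 h22 h31 E32 E33.
Qed.
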